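(* Let $\alpha=(a_1,\dots,a_w)$ have $m$ nonempty horizontal lists. (1) Let $a_i,a_j\in\mathbb{L}^t_\alpha$ with $a_i<a_j$. Then for every $1\le k<t$, the items $lm^k_\alpha(a_i)$, $lm^k_\alpha(a_j)$, $un^k_\alpha(a_i)$ and $un^k_\alpha(a_j)$ all lie in $\mathbb{L}^{t-k}_\alpha$. Moreover, $lm^k_\alpha(a_i)\le lm^k_\alpha(a_j)$ and $un^k_\alpha(a_i)\le un^k_\alpha(a_j)$ as values. (2) Let $a_i\in\mathbb{L}^t_\alpha$, and let $\beta=(a_{i_{t-1}},\dots,a_{i_1},a_{i_0})$, with $a_{i_0}=a_i$, be any increasing subsequence of $\alpha$ of length $t$ ending at $a_i$. Then for every $0\le k\le t-1$, the items $lm^k_\alpha(a_i)$, $a_{i_k}$ and $un^k_\alpha(a_i)$ lie in $\mathbb{L}^{t-k}_\alpha$, and $lm^k_\alpha(a_i)\ge a_{i_k}\ge un^k_\alpha(a_i)$. (3) Let $a_i\in\mathbb{L}^m_\alpha$. Among all longest increasing subsequences of $\alpha$ ending at $a_i$, the sequence $(lm^{m-1}_\alpha(a_i),\dots,lm^0_\alpha(a_i))$ has maximum weight and minimum gap. The sequence $(un^{m-1}_\alpha(a_i),\dots,un^0_\alpha(a_i))$ has minimum weight and maximum gap. (4) Let $a^m_h$ and $a^m_t$ be the first and last items of $\mathbb{L}^m_\alpha$. Then $(lm^{m-1}_\alpha(a^m_h),\dots,lm^0_\alpha(a^m_h))$ is a longest increasing subsequence of $\alpha$ of maximum weight. Also,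 $(un^{m-1}_\alpha(a^m_t),\dots,un^0_\alpha(a^m_t))$ is a longest increasing subsequence of $\alpha$ of minimum weight.
   Context: Let $\alpha=(a_1,\dots,a_w)$ be a finite sequence of real numbers, with items identified by their positions. Increasing subsequences are non-strict: indices strictly increase and values satisfy $\le$. $a_j$ is compatible with $a_i$ if $j<i$ and $a_j\le a_i$. $RL_\alpha(a)$ is the maximum length of an increasing subsequence ending at $a$. $a_j$ is a predecessor of $a_i$ if it is compatible with $a_i$ and $RL_\alpha(a_j)=RL_\alpha(a_i)-1$. The horizontal list $\mathbb{L}^t_\alpha$ is the list of items of rising length $t$, ordered by position; $m$ is the number of nonempty lists, which equals the length of a longest increasing subsequence. The up neighbor $un_\alpha(a_i)$ is the item $a_j$ with the largest $j<i$ and $RL_\alpha(a_j)=RL_\alpha(a_i)-1$. The leftmost child $lm_\alpha(a_i)$ is the predecessor of $a_i$ with smallest position. Further, $un^0_\alpha(a)=lm^0_\alpha(a)=a$, $un^k_\alpha=un_\alpha\circ un^{k-1}_\alpha$, and $lm^k_\alpha=lm_\alpha\circ lm^{k-1}_\alpha$. For an increasing subsequence $s$, its weight is the sum of its items, and its gap is (last item) $-$ (first item). *)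

From HB Require Import structures.
From mathcomp Require Import all_boot all_order all_algebra.
Set Implicit Arguments. Unset Strict Implicit. Unset Printing Implicit Defensive.
Import Order.TTheory GRing.Theory Num.Theory.
Local Open Scope ring_scope.

Section LIS.
Variable R : realDomainType.
Variable alpha : seq R.

(* Items are identified by their (0-based) positions. *)
Definition itm (i : nat) : R := nth 0 alpha i.

Definition positions : seq nat := iota 0 (size alpha).

(* An increasing (non-strict) subsequence, given by its strictly increasing
   list of positions. *)
Definition incr_sub (s : seq nat) : bool :=
  subseq s positions && sorted (fun j k => itm j <= itm k) s.

Definition ends_at (s : seq nat) (i : nat) : bool :=
  (s != [::]) && (last 0%N s == i).

Definition compat (j i : nat) : bool := (j < i)%N && (itm j <= itm i).

Definition RL (i : nat) : nat :=
  \max_(b : (size alpha).-tuple bool |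
          incr_sub (mask b positions) && ends_at (mask b positions) i)
     size (mask b positions).

Definition is_pred (j i : nat) : bool := compat j i && (RL j + 1 == RL i)%N.

Definition L (t : nat) : seq nat := [seq i <- positions | RL i == t].

(* number of nonempty horizontal lists (RL values range in 1..w) *)
Definition mlists : nat :=
  size [seq t <- iota 1 (size alpha) | L t != [::]].

Definition un (i : nat) : nat :=
  last i [seq j <- iota 0 i | (RL j + 1 == RL i)%N].

Definition lm (i : nat) : nat :=
  head i [seq j <- iota 0 i | is_pred j i].

Definition weight (s : seq nat) : R := \sum_(j <- s) itm j.
Definition gap (s : seq nat) : R := itm (last 0%N s) - itm (head 0%N s).

Definition chain (f : nat -> nat) (n i : nat) : seq nat :=
  [seq iter (n - 1 - k) f i | k <- iota 0 n].

End LIS.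

From Pilot Require Import Defs.
From HB Require Import structures.
From mathcomp Require Import all_boot all_order all_algebra zify.
Import Order.TTheory GRing.Theory Num.Theory.

Set Implicit Arguments.
Unset Strict Implicit.
Unset Printing Implicit Defensive.

(* Items of one horizontal list decrease in value from left to right, since
   two compatible items have different rising lengths.  Every item x with
   RL x = t > 1 has a predecessor, and lm x and un x are predecessors, so
   iterating either map walks down the lists one level at a time along an
   increasing subsequence ending at x.  Among the items of level t - 1 that are
   compatible with x, lm x has the largest value and un x the smallest; by
   induction on k, the k-th item from the end of any increasing subsequence of
   length t ending at x is squeezed in value between un^k x and lm^k x, which
   gives the weight bounds and, for k = t - 1, the gap bounds.  The same
   induction makes lm^k and un^k monotone in the value of the starting item, so
   for (4) one starts from the first (largest) or last (smallest) item of the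
   top list. *)

Lemma subseq_iotaE (s : seq nat) n :
  subseq s (iota 0 n) = sorted ltn s && all (gtn n) s.
Proof.
apply/idP/andP => [sub_s | [sorted_s lt_s]].
  split; first exact: (subseq_sorted ltn_trans sub_s (iota_ltn_sorted 0 n)).
  by apply/allP => x /(mem_subseq sub_s); rewrite mem_iota.
apply/(subseq_uniqP (iota_uniq 0 n)).
apply: (irr_sorted_eq ltn_trans ltnn sorted_s).
  exact: (sorted_filter ltn_trans _ (iota_ltn_sorted 0 n)).
move=> x; rewrite mem_filter mem_iota /=.
by case s_x: (x \in s) => //=; have /= -> := allP lt_s x s_x.
Qed.

Lemma head_filter_iota_leq (p : pred nat) i d y :
  y < i -> p y -> head d [seq j <- iota 0 i | p j] <= y.
Proof.
move=> lt_yi py.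
have : y \in [seq j <- iota 0 i | p j] by rewrite mem_filter py mem_iota.
have := sorted_filter ltn_trans p (iota_ltn_sorted 0 i).
case: [seq _ <- _ | _] => //= h t /(order_path_min ltn_trans) /allP h_min.
by rewrite inE => /predU1P[-> // | /h_min /ltnW].
Qed.

Lemma last_filter_iota_geq (p : pred nat) i d y :
  y < i -> p y -> y <= last d [seq j <- iota 0 i | p j].
Proof.
move=> lt_yi py.
have : y \in [seq j <- iota 0 i | p j] by rewrite mem_filter py mem_iota.
have := sorted_filter ltn_trans p (iota_ltn_sorted 0 i).
case/lastP: [seq _ <- _ | _] => // q z.
rewrite -rev_sorted rev_rcons last_rcons /=.
have gt_trans : transitive (fun x y => y < x) by move=> ? ? ? /[swap]; apply: ltn_trans.
move=> /(order_path_min gt_trans) /allP z_max.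
by rewrite mem_rcons inE => /predU1P[-> // | ]; rewrite -mem_rev => /z_max /ltnW.
Qed.

Lemma head_in (T : eqType) (s : seq T) d x : x \in s -> head d s \in s.
Proof. by case: s => //= y s _; apply: mem_head. Qed.

Lemma last_in (T : eqType) (s : seq T) d x : x \in s -> last d s \in s.
Proof. by case: s => //= y s _; apply: mem_last. Qed.

Lemma size_chain f m i : size (chain f m i) = m.
Proof. by rewrite size_map size_iota. Qed.

Lemma nth_chain f m i q : q < m -> nth 0 (chain f m i) q = iter (m - 1 - q) f i.
Proof. by move=> lt_qm; rewrite (nth_map 0) ?size_iota // nth_iota. Qed.

Lemma ends_at_chain f m i : 0 < m -> ends_at (chain f m i) i.
Proof.
move=> m_gt0; rewrite /ends_at -nth_last size_chain nth_chain; last lia.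
by rewrite (_ : m - 1 - m.-1 = 0) ?eqxx ?andbT -?size_eq0 ?size_chain -?lt0n; lia.
Qed.

Lemma filter_iota_leq m n : m <= n -> [seq t <- iota 1 n | t <= m] = iota 1 m.
Proof.
move=> le_mn; rewrite -(subnKC le_mn) iotaD filter_cat.
rewrite (all_filterP _); last by apply/allP => t; rewrite mem_iota; lia.
rewrite (_ : filter _ _ = [::]) ?cats0 //; apply/eqP/negbNE; rewrite -has_filter.
by apply/hasPn => t; rewrite mem_iota -ltnNge; lia.
Qed.

Section LIS.
Variables (R : realDomainType) (alpha : seq R).
Local Notation a := (itm alpha).
Local Notation n := (size alpha).
Local Notation RL := (RL alpha).
Local Notation L := (L alpha).
Local Notation lm := (lm alpha).
Local Notation un := (un alpha).

Lemma incr_subE s : incr_sub alpha s = sorted (compat alpha) s && all (gtn n) s.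
Proof.
rewrite /incr_sub /positions subseq_iotaE.
rewrite (_ : compat alpha = [rel j k | ltn j k && (a j <= a k)%R]) // sorted_relI.
by rewrite -!andbA; congr (_ && _); rewrite andbC.
Qed.

Lemma size_le_RL s i : incr_sub alpha s -> ends_at s i -> size s <= RL i.
Proof.
move=> incr_s ends_s; have /andP[/subseqP[b size_b s_eq] _] := incr_s.
have size_b' : size b == n by rewrite size_b size_iota.
by rewrite s_eq; apply: (leq_bigmax_cond (Tuple size_b')); rewrite /= -s_eq incr_s.
Qed.

Lemma incr_sub_rcons2 s j i :
  incr_sub alpha (rcons (rcons s j) i) =
  [&& incr_sub alpha (rcons s j), compat alpha j i & i < n].
Proof.
rewrite !incr_subE !all_rcons.
case: s => [|x s] /=; rewrite ?andbT ?rcons_path ?last_rcons;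
  by case: (compat alpha j i) (i < n) => [] []; rewrite ?andbT ?andbF.
Qed.

Lemma RL_witness i :
  0 < RL i -> exists s, [/\ incr_sub alpha s, ends_at s i & size s = RL i].
Proof.
rewrite /Defs.RL.
case: (pickP (fun b : n.-tuple bool => incr_sub alpha (mask b (positions alpha))
                 && ends_at (mask b (positions alpha)) i)) => [b0 Pb0 | none];
  last by rewrite big_pred0.
rewrite (bigop.bigmax_eq_arg b0) //.
by case: arg_maxnP => // b /andP[incr_b ends_b] _ _; exists (mask b (positions alpha)).
Qed.

Lemma ends_at_mem s i : ends_at s i -> i \in s.
Proof. by case: s => //= x s /andP[_ /eqP <-]; apply: mem_last. Qed.

Lemma ends_at_size_gt0 s i : ends_at s i -> 0 < size s.
Proof. by case/andP; rewrite lt0n size_eq0. Qed.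

Lemma ends_at_rcons s i : ends_at (rcons s i) i.
Proof. by rewrite /ends_at last_rcons eqxx andbT; case: s. Qed.

Lemma RL_gt0 i : (0 < RL i) = (i < n).
Proof.
apply/idP/idP => [/RL_witness[s [incr_s /ends_at_mem s_i _]] | lt_in].
  by move: incr_s; rewrite incr_subE => /andP[_ /allP/(_ i s_i)].
have : ends_at [:: i] i by rewrite /ends_at /=.
apply: size_le_RL; rewrite incr_subE /= andbT; exact: lt_in.
Qed.

Lemma RL_le_size i : RL i <= n.
Proof.
case: (posnP (RL i)) => [-> // | /RL_witness[s [/andP[sub_s _] _ <-]]].
by rewrite -(size_iota 0 n) size_subseq.
Qed.

Lemma RL_compat j i : compat alpha j i -> i < n -> RL j < RL i.
Proof.
move=> compat_ji lt_in; have /andP[lt_ji _] := compat_ji.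
have /RL_witness[s [incr_s ends_s <-]] : 0 < RL j by rewrite RL_gt0 (ltn_trans lt_ji).
case/lastP: s incr_s ends_s => // s x incr_s /andP[_].
rewrite last_rcons => /eqP x_j; subst x.
rewrite -(size_rcons _ i) (size_le_RL _ (ends_at_rcons _ _)) //.
by rewrite incr_sub_rcons2 incr_s compat_ji lt_in.
Qed.

Lemma exists_pred i : 1 < RL i -> exists j, is_pred alpha j i.
Proof.
move=> gt1_RLi; have /RL_witness[s [incr_s ends_s size_s]] := ltnW gt1_RLi.
case/lastP: s incr_s ends_s size_s => // p x + /andP[_].
rewrite last_rcons => + /eqP x_i; subst x.
case/lastP: p => [_ /= size_i | q j]; first by rewrite -size_i in gt1_RLi.
rewrite incr_sub_rcons2 => /and3P[incr_qj compat_ji lt_in] size_s.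
have := size_le_RL incr_qj (ends_at_rcons _ _).
have := RL_compat compat_ji lt_in.
rewrite !size_rcons in size_s *.
by exists j; rewrite /is_pred compat_ji /=; apply/eqP; lia.
Qed.

Lemma same_RL_lt j i : RL j = RL i -> i < n -> j < i -> (a i < a j)%R.
Proof.
move=> RL_ji lt_in lt_ji; rewrite ltNge; apply/negP => le_ji.
by have := @RL_compat j i; rewrite /compat lt_ji le_ji RL_ji ltnn => /(_ isT lt_in).
Qed.

Lemma same_RL_le j i : RL j = RL i -> i < n -> j <= i -> (a i <= a j)%R.
Proof.
move=> RL_ji lt_in; rewrite leq_eqVlt => /predU1P[-> // | lt_ji].
exact/ltW/same_RL_lt.
Qed.

Lemma same_RL_leq j i : RL j = RL i -> i < n -> (a j <= a i)%R -> i <= j.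
Proof.
move=> RL_ji lt_in le_ji; rewrite leqNgt; apply/negP => lt_ji.
by have := same_RL_lt RL_ji lt_in lt_ji; rewrite ltNge le_ji.
Qed.

Lemma mem_L t x : (x \in L t) = (0 < t) && (RL x == t).
Proof.
rewrite mem_filter mem_iota add0n -RL_gt0 /=.
by case: eqP => [-> | _]; rewrite ?andbT ?andbF.
Qed.

Lemma mem_L_RL t x : x \in L t -> RL x = t.
Proof. by rewrite mem_L => /andP[_ /eqP]. Qed.

Lemma is_pred_lt j i : is_pred alpha j i -> j < i.
Proof. by case/andP=> /andP[]. Qed.

Lemma is_pred_RL j i : is_pred alpha j i -> RL j + 1 = RL i.
Proof. by case/andP=> _ /eqP. Qed.

Lemma lm_is_pred i : 1 < RL i -> is_pred alpha (lm i) i.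
Proof.
move=> /exists_pred[j pred_ji].
have : j \in [seq k <- iota 0 i | is_pred alpha k i].
  by rewrite mem_filter pred_ji mem_iota (is_pred_lt pred_ji).
by move=> /(head_in i); rewrite mem_filter => /andP[].
Qed.

Lemma lm_leq i y : is_pred alpha y i -> lm i <= y.
Proof. by move=> pred_yi; apply: head_filter_iota_leq (is_pred_lt pred_yi) _. Qed.

(* An item of level RL i - 1 left of lm i would be an earlier predecessor;
   one to its right is not larger, as values decrease along a level. *)
Lemma le_lm i y :
  1 < RL i -> RL y + 1 = RL i -> (a y <= a i)%R -> (a y <= a (lm i))%R.
Proof.
move=> gt1_RLi RL_yi le_yi; have pred_lm := lm_is_pred gt1_RLi.
have [lt_y_lm | le_lm_y] := ltnP y (lm i).
  have pred_yi : is_pred alpha y i.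
    rewrite /is_pred /compat RL_yi eqxx le_yi !andbT.
    exact: ltn_trans lt_y_lm (is_pred_lt pred_lm).
  by have := lm_leq pred_yi; rewrite leqNgt lt_y_lm.
have RL_lm := is_pred_RL pred_lm.
by apply: same_RL_le le_lm_y; [lia | rewrite -RL_gt0; lia].
Qed.

Lemma un_lt_RL i : 1 < RL i -> un i < i /\ RL (un i) + 1 = RL i.
Proof.
move=> /exists_pred[j pred_ji].
have : j \in [seq k <- iota 0 i | RL k + 1 == RL i].
  by rewrite mem_filter (is_pred_RL pred_ji) eqxx mem_iota (is_pred_lt pred_ji).
by move=> /(last_in i); rewrite mem_filter mem_iota => /andP[/eqP -> /andP[_ ->]].
Qed.

Lemma un_geq i y : y < i -> RL y + 1 = RL i -> y <= un i.
Proof. by move=> lt_yi RL_yi; apply: last_filter_iota_geq; rewrite /= ?RL_yi. Qed.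

Lemma un_le i y : 1 < RL i -> y < i -> RL y + 1 = RL i -> (a (un i) <= a y)%R.
Proof.
move=> gt1_RLi lt_yi RL_yi; have [_ RL_un] := un_lt_RL gt1_RLi.
apply: same_RL_le (un_geq lt_yi RL_yi); first by lia.
by rewrite -RL_gt0; lia.
Qed.

Lemma un_is_pred i : 1 < RL i -> is_pred alpha (un i) i.
Proof.
move=> gt1_RLi; have [lt_un RL_un] := un_lt_RL gt1_RLi.
have [j pred_ji] := exists_pred gt1_RLi; have /andP[/andP[lt_ji le_ji] _] := pred_ji.
rewrite /is_pred /compat lt_un RL_un eqxx andbT /=.
exact: le_trans (un_le gt1_RLi lt_ji (is_pred_RL pred_ji)) le_ji.
Qed.

Section Descent.
Variable f : nat -> nat.
Hypothesis f_is_pred : forall i, 1 < RL i -> is_pred alpha (f i) i.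

Lemma RL_iter i k : k < RL i -> RL (iter k f i) = RL i - k.
Proof.
elim: k => [|k IHk] lt_k; first by rewrite subn0.
have RL_k := IHk (ltnW lt_k).
have /is_pred_RL : is_pred alpha (f (iter k f i)) (iter k f i) by apply: f_is_pred; lia.
by rewrite iterS; lia.
Qed.

Lemma iter_mem_L t i k : i \in L t -> k < t -> iter k f i \in L (t - k).
Proof. by rewrite !mem_L => /andP[_ /eqP RL_i] lt_kt; rewrite RL_iter RL_i; lia. Qed.

Lemma incr_sub_chain t i : i \in L t -> incr_sub alpha (chain f t i).
Proof.
rewrite mem_L => /andP[t_gt0 /eqP RL_i]; rewrite incr_subE; apply/andP; split.
  apply/(sortedP 0) => q; rewrite size_chain => lt_q.
  rewrite !nth_chain; try lia.
  rewrite (_ : t - 1 - q = (t - 1 - q.+1).+1); last lia.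
  rewrite iterS; set x := iter _ f i.
  have /andP[] // : is_pred alpha (f x) x by apply: f_is_pred; rewrite RL_iter; lia.
apply/allP => x /mapP[k]; rewrite mem_iota => /andP[_ lt_k] ->.
by rewrite /gtn /= -RL_gt0 RL_iter; lia.
Qed.
End Descent.

Lemma iter_lm_le x y k : RL x = RL y -> (a x <= a y)%R -> k < RL x ->
  (a (iter k lm x) <= a (iter k lm y))%R.
Proof.
move=> RL_xy le_xy; elim: k => [|k IHk] lt_k //=.
have le_k : (a (iter k lm x) <= a (iter k lm y))%R by apply: IHk; lia.
have RL_xk := RL_iter lm_is_pred (ltnW lt_k).
have RL_yk : RL (iter k lm y) = RL x - k.
  by rewrite RL_xy; apply: (RL_iter lm_is_pred); lia.
move: (iter k lm x) (iter k lm y) le_k RL_xk RL_yk => x' y' le_x'y' RL_x' RL_y'.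
have /andP[/andP[_ le_lm_x'] /eqP RL_lm_x'] : is_pred alpha (lm x') x'.
  by apply: lm_is_pred; lia.
by apply: le_lm; [lia | lia | apply: le_trans le_lm_x' le_x'y'].
Qed.

Lemma iter_un_le x y k : RL x = RL y -> (a x <= a y)%R -> k < RL x ->
  (a (iter k un x) <= a (iter k un y))%R.
Proof.
move=> RL_xy le_xy; elim: k => [|k IHk] lt_k //=.
have le_k : (a (iter k un x) <= a (iter k un y))%R by apply: IHk; lia.
have RL_xk := RL_iter un_is_pred (ltnW lt_k).
have RL_yk : RL (iter k un y) = RL x - k.
  by rewrite RL_xy; apply: (RL_iter un_is_pred); lia.
move: (iter k un x) (iter k un y) le_k RL_xk RL_yk => x' y' le_x'y' RL_x' RL_y'.
have [lt_un_y' RL_un_y'] : un y' < y' /\ RL (un y') + 1 = RL y' by apply: un_lt_RL; lia.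
have le_y'x' : y' <= x' by apply: same_RL_leq le_x'y'; [lia | rewrite -RL_gt0; lia].
by apply: un_le; [lia | apply: leq_trans le_y'x' | lia].
Qed.

Lemma weight_le_nth (s1 s2 : seq nat) : size s1 = size s2 ->
  (forall q, q < size s1 -> (a (nth 0%N s1 q) <= a (nth 0%N s2 q))%R) ->
  (weight alpha s1 <= weight alpha s2)%R.
Proof.
move=> size_s12 le_s12; rewrite /weight (big_nth 0) [leRHS](big_nth 0) -size_s12.
by rewrite !big_seq ler_sum // => q; rewrite mem_index_iota => /andP[_ /le_s12].
Qed.

Lemma gapE s i : ends_at s i -> gap alpha s = (a i - a (nth 0%N s 0%N))%R.
Proof. by case/andP=> _ /eqP <-. Qed.

Section IncreasingSubsequence.
Variables (s : seq nat) (i : nat).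
Hypotheses (incr_s : incr_sub alpha s) (ends_s : ends_at s i) (RL_i : RL i = size s).

Lemma nth_compat q : q.+1 < size s -> compat alpha (nth 0 s q) (nth 0 s q.+1).
Proof.
by move: incr_s; rewrite incr_subE => /andP[/(sortedP 0) sorted_s _]; apply: sorted_s.
Qed.

Lemma nth_lt_size q : q < size s -> nth 0 s q < n.
Proof.
move: incr_s; rewrite incr_subE => /andP[_ /allP lt_s] lt_q.
exact: lt_s (mem_nth 0 lt_q).
Qed.

Lemma nth_ends_at : nth 0 s (size s - 1) = i.
Proof. by move: ends_s => /andP[_ /eqP <-]; rewrite subn1 nth_last. Qed.

Lemma RL_nth_addn q d : q + d < size s -> RL (nth 0 s q) + d <= RL (nth 0 s (q + d)).
Proof.
elim: d => [|d IHd]; first by rewrite !addn0.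
rewrite addnS => lt_qd; have := RL_compat (nth_compat lt_qd) (nth_lt_size lt_qd).
by have := IHd (ltnW lt_qd); lia.
Qed.

Let size_gt0 := ends_at_size_gt0 ends_s.

(* Rising lengths strictly increase along s, from at least 1 at its head to
   RL i = size s at its end. *)
Lemma RL_nth q : q < size s -> RL (nth 0 s q) = q.+1.
Proof.
move=> lt_q; have := RL_nth_addn (q := 0) lt_q; rewrite add0n.
have := RL_nth_addn (q := q) (d := size s - 1 - q).
rewrite (_ : q + (size s - 1 - q) = size s - 1); last by have := size_gt0; lia.
rewrite nth_ends_at RL_i => /(_ ltac:(lia)).
have : 0 < RL (nth 0 s 0) by rewrite RL_gt0 nth_lt_size ?size_gt0.
by lia.
Qed.

Lemma nth_mem_L k : k <= size s - 1 -> nth 0 s (size s - 1 - k) \in L (size s - k).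
Proof.
move=> le_k; have s_gt0 := size_gt0.
by rewrite mem_L RL_nth; [apply/andP; split | ]; lia.
Qed.

Lemma nth_le_iter_lm k : k <= size s - 1 ->
  (a (nth 0%N s (size s - 1 - k)) <= a (iter k lm i))%R.
Proof.
elim: k => [|k IHk] le_k; first by rewrite subn0 nth_ends_at.
have RL_k : RL (iter k lm i) = size s - k by rewrite (RL_iter lm_is_pred); lia.
rewrite (_ : size s - 1 - k = (size s - 1 - k.+1).+1) in IHk; last by lia.
have /andP[_ le_nth] := nth_compat (q := size s - 1 - k.+1) ltac:(lia).
apply: le_lm; first by rewrite RL_k; lia.
  by rewrite RL_k RL_nth; lia.
by apply: le_trans le_nth (IHk _); lia.
Qed.

Lemma iter_un_le_nth k : k <= size s - 1 ->
  (a (iter k un i) <= a (nth 0%N s (size s - 1 - k)))%R.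
Proof.
elim: k => [|k IHk] le_k; first by rewrite subn0 nth_ends_at.
have RL_k : RL (iter k un i) = size s - k by rewrite (RL_iter un_is_pred); lia.
rewrite (_ : size s - 1 - k = (size s - 1 - k.+1).+1) in IHk; last by lia.
set q := size s - 1 - k.+1 in IHk *.
have /andP[lt_nth _] := nth_compat (q := q) ltac:(lia).
have le_nth_un : nth 0 s q.+1 <= iter k un i.
  apply: same_RL_leq (IHk _); [by rewrite RL_k RL_nth; lia | | by lia].
  by apply: nth_lt_size; lia.
apply: un_le; first by rewrite RL_k; lia.
  exact: leq_trans lt_nth le_nth_un.
by rewrite RL_k RL_nth; lia.
Qed.

Lemma weight_le_chain_lm : (weight alpha s <= weight alpha (chain lm (size s) i))%R.
Proof.
apply: weight_le_nth => [|q lt_q]; first by rewrite size_chain.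
have := nth_le_iter_lm (k := size s - 1 - q) ltac:(lia).
by rewrite nth_chain // (_ : size s - 1 - (size s - 1 - q) = q); last lia.
Qed.

Lemma weight_chain_un_le : (weight alpha (chain un (size s) i) <= weight alpha s)%R.
Proof.
apply: weight_le_nth => [|q]; rewrite size_chain // => lt_q.
have := iter_un_le_nth (k := size s - 1 - q) ltac:(lia).
by rewrite nth_chain // (_ : size s - 1 - (size s - 1 - q) = q); last lia.
Qed.

Lemma gap_chain_lm_le : (gap alpha (chain lm (size s) i) <= gap alpha s)%R.
Proof.
rewrite (gapE ends_s) (gapE (ends_at_chain _ _ size_gt0)) nth_chain ?size_gt0 //.
by rewrite lerB // subn0 -[X in nth _ _ X](subnn (size s - 1)) nth_le_iter_lm.
Qed.

Lemma gap_le_chain_un : (gap alpha s <= gap alpha (chain un (size s) i))%R.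
Proof.
rewrite (gapE ends_s) (gapE (ends_at_chain _ _ size_gt0)) nth_chain ?size_gt0 //.
by rewrite lerB // subn0 -[X in nth _ _ X](subnn (size s - 1)) iter_un_le_nth.
Qed.
End IncreasingSubsequence.

Lemma weight_chain_lm_homo x y : RL x = RL y -> (a x <= a y)%R ->
  (weight alpha (chain lm (RL x) x) <= weight alpha (chain lm (RL x) y))%R.
Proof.
move=> RL_xy le_xy; apply: weight_le_nth => [|q]; rewrite !size_chain // => lt_q.
by rewrite !nth_chain //; apply: iter_lm_le; lia.
Qed.

Lemma weight_chain_un_homo x y : RL x = RL y -> (a x <= a y)%R ->
  (weight alpha (chain un (RL x) x) <= weight alpha (chain un (RL x) y))%R.
Proof.
move=> RL_xy le_xy; apply: weight_le_nth => [|q]; rewrite !size_chain // => lt_q.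
by rewrite !nth_chain //; apply: iter_un_le; lia.
Qed.

Lemma RL_eq0 x : n <= x -> RL x = 0.
Proof. by move=> le_nx; apply/eqP; rewrite -leqn0 leqNgt RL_gt0 -leqNgt. Qed.

Lemma exists_RL_eq j t : 0 < t <= RL j -> exists x, RL x = t.
Proof.
move=> /andP[t_gt0 le_t]; exists (iter (RL j - t) lm j).
by rewrite (RL_iter lm_is_pred); lia.
Qed.

(* Iterating lm from j reaches every level up to RL j, so the nonempty
   horizontal lists are exactly L^1, ..., L^(RL j). *)
Lemma mlists_RL_max j : (forall x, RL x <= RL j) -> mlists alpha = RL j.
Proof.
move=> max_j; rewrite /mlists -[RHS](size_iota 1) -(filter_iota_leq (RL_le_size j)).
congr size.
apply: eq_in_filter => t; rewrite mem_iota => /andP[t_gt0 _].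
rewrite /Defs.L -has_filter; apply/idP/idP => [/hasP[x _ /eqP <-] // | le_t].
have [x RL_x] : exists x, RL x = t by apply: (exists_RL_eq (j := j)); rewrite t_gt0.
by apply/hasP; exists x; rewrite ?RL_x // mem_iota -RL_gt0; lia.
Qed.

Section Longest.
Hypothesis size_alpha_gt0 : 0 < n.
Local Notation m := (mlists alpha).

Lemma exists_RL_max : exists j, forall x, RL x <= RL j.
Proof.
have [j0 max_j0] := bigop.eq_bigmax (fun j : 'I_n => RL j) ltac:(by rewrite card_ord).
exists j0 => x; have [lt_xn | /RL_eq0 -> //] := ltnP x n.
by have := bigop.leq_bigmax (F := fun j : 'I_n => RL j) (Ordinal lt_xn); rewrite max_j0.
Qed.

Lemma RL_le_mlists x : RL x <= m.
Proof. by have [j max_j] := exists_RL_max; rewrite (mlists_RL_max max_j). Qed.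

Lemma mlists_gt0 : 0 < m.
Proof. by apply: leq_trans (RL_le_mlists 0); rewrite RL_gt0. Qed.

Lemma exists_mem_L_mlists : exists j, j \in L m.
Proof.
have [j max_j] := exists_RL_max.
by exists j; rewrite mem_L mlists_gt0 (mlists_RL_max max_j) eqxx.
Qed.

Lemma head_L_mlists : head 0 (L m) \in L m.
Proof. by have [j /(head_in 0)] := exists_mem_L_mlists. Qed.

Lemma last_L_mlists : last 0 (L m) \in L m.
Proof. by have [j /(last_in 0)] := exists_mem_L_mlists. Qed.

Lemma size_le_mlists s : incr_sub alpha s -> size s <= m.
Proof.
case/lastP: s => // s x incr_s; apply: leq_trans (RL_le_mlists x).
exact: size_le_RL incr_s (ends_at_rcons s x).
Qed.

Lemma RL_last_longest s : incr_sub alpha s -> size s = m ->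
  ends_at s (last 0 s) /\ RL (last 0 s) = m.
Proof.
move=> incr_s size_s.
have ends_s : ends_at s (last 0 s).
  by rewrite /ends_at eqxx andbT -size_eq0 size_s -lt0n mlists_gt0.
split=> //; apply/eqP; rewrite eqn_leq RL_le_mlists -{1}size_s.
exact: size_le_RL incr_s ends_s.
Qed.

Lemma weight_le_chain_lm_head s : incr_sub alpha s -> size s = m ->
  (weight alpha s <= weight alpha (chain lm m (head 0 (L m))))%R.
Proof.
move=> incr_s size_s; have [ends_s RL_e] := RL_last_longest incr_s size_s.
have RL_h := mem_L_RL head_L_mlists.
have lt_en : last 0 s < n by rewrite -RL_gt0 RL_e mlists_gt0.
have le_eh : (a (last 0 s) <= a (head 0 (L m)))%R.
  apply: same_RL_le; rewrite ?RL_h //.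
  by apply: head_filter_iota_leq; rewrite /= ?RL_e.
apply: le_trans (weight_le_chain_lm incr_s ends_s _) _; first by rewrite RL_e.
rewrite size_s; have := weight_chain_lm_homo (x := last 0 s) (y := head 0 (L m)).
by rewrite RL_e RL_h; apply.
Qed.

Lemma weight_chain_un_last_le s : incr_sub alpha s -> size s = m ->
  (weight alpha (chain un m (last 0 (L m))) <= weight alpha s)%R.
Proof.
move=> incr_s size_s; have [ends_s RL_e] := RL_last_longest incr_s size_s.
have RL_t := mem_L_RL last_L_mlists.
have lt_en : last 0 s < n by rewrite -RL_gt0 RL_e mlists_gt0.
have le_te : (a (last 0 (L m)) <= a (last 0 s))%R.
  apply: same_RL_le; first by rewrite RL_e RL_t.
    by rewrite -RL_gt0 RL_t mlists_gt0.
  by apply: last_filter_iota_geq; rewrite /= ?RL_e.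
apply: le_trans _ (weight_chain_un_le incr_s ends_s _); last by rewrite RL_e.
rewrite size_s; have := weight_chain_un_homo (x := last 0 (L m)) (y := last 0 s).
by rewrite RL_e RL_t; apply.
Qed.
End Longest.
End LIS.

Local Open Scope ring_scope.

Theorem theorem6 (R : realDomainType) (alpha : seq R) :
  (0 < size alpha)%N ->
  let a := itm alpha in
  let m := mlists alpha in
  (* (1) *)
  (forall (t i j : nat), i \in L alpha t -> j \in L alpha t -> a i < a j ->
     forall k : nat, (1 <= k < t)%N ->
       [/\ iter k (lm alpha) i \in L alpha (t - k),
           iter k (lm alpha) j \in L alpha (t - k),
           iter k (un alpha) i \in L alpha (t - k) &
           iter k (un alpha) j \in L alpha (t - k)] /\
       a (iter k (lm alpha) i) <= a (iter k (lm alpha) j) /\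
       a (iter k (un alpha) i) <= a (iter k (un alpha) j)) /\
  (* (2) *)
  (forall (t i : nat) (s : seq nat), i \in L alpha t ->
     incr_sub alpha s -> size s = t -> ends_at s i ->
     forall k : nat, (k <= t - 1)%N ->
       let ik := nth 0%N s (t - 1 - k) in
       [/\ iter k (lm alpha) i \in L alpha (t - k),
           ik \in L alpha (t - k),
           iter k (un alpha) i \in L alpha (t - k),
           a ik <= a (iter k (lm alpha) i) &
           a (iter k (un alpha) i) <= a ik]) /\
  (* (3) *)
  (forall i : nat, i \in L alpha m ->
     let slm := chain (lm alpha) m i in
     let sun := chain (un alpha) m i in
     [/\ incr_sub alpha slm /\ size slm = m /\ ends_at slm i,
         incr_sub alpha sun /\ size sun = m /\ ends_at sun i &
         forall s : seq nat, incr_sub alpha s -> size s = m -> ends_at s i ->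
           [/\ weight alpha s <= weight alpha slm,
               gap alpha slm <= gap alpha s,
               weight alpha sun <= weight alpha s &
               gap alpha s <= gap alpha sun]]) /\
  (* (4) *)
  (let h := head 0%N (L alpha m) in
   let tl := last 0%N (L alpha m) in
   let slm := chain (lm alpha) m h in
   let sun := chain (un alpha) m tl in
   [/\ incr_sub alpha slm,
       forall s, incr_sub alpha s -> (size s <= size slm)%N &
       forall s, incr_sub alpha s -> size s = size slm ->
                 weight alpha s <= weight alpha slm] /\
   [/\ incr_sub alpha sun,
       forall s, incr_sub alpha s -> (size s <= size sun)%N &
       forall s, incr_sub alpha s -> size s = size sun ->
                 weight alpha sun <= weight alpha s]).
Proof.
move=> n_gt0 a m; rewrite {}/a {}/m.
have lm_pred := @lm_is_pred _ alpha; have un_pred := @un_is_pred _ alpha.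
have lm_mem := iter_mem_L lm_pred; have un_mem := iter_mem_L un_pred.
split; [|split; [|split]].
- move=> t i j L_i L_j lt_ij k /andP[_ lt_kt].
  split; first by split; [apply: lm_mem | apply: lm_mem | apply: un_mem | apply: un_mem].
  by split; [apply: iter_lm_le | apply: iter_un_le];
    rewrite ?(ltW lt_ij) ?(mem_L_RL L_i) ?(mem_L_RL L_j).
- move=> t i s L_i incr_s size_s ends_s k le_k /=; subst t.
  have RL_i := mem_L_RL L_i.
  have lt_k : (k < size s)%N by have := ends_at_size_gt0 ends_s; lia.
  split; [exact: lm_mem | exact: nth_mem_L ends_s RL_i _ le_k | exact: un_mem | |].
    exact: nth_le_iter_lm ends_s RL_i _ le_k.
  exact: iter_un_le_nth ends_s RL_i _ le_k.
- move=> i L_i /=; have RL_i := mem_L_RL L_i; have m_gt0 := mlists_gt0 n_gt0.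
  rewrite !size_chain !ends_at_chain //; split.
  + by split; first exact: (incr_sub_chain lm_pred L_i).
  + by split; first exact: (incr_sub_chain un_pred L_i).
  move=> s incr_s size_s ends_s; rewrite -size_s; rewrite -size_s in RL_i.
  split; [exact: weight_le_chain_lm | exact: gap_chain_lm_le |
          exact: weight_chain_un_le | exact: gap_le_chain_un].
split; split; rewrite ?size_chain.
- exact: (incr_sub_chain lm_pred (head_L_mlists n_gt0)).
- by move=> s; apply: size_le_mlists.
- by move=> s incr_s; apply: weight_le_chain_lm_head.
- exact: (incr_sub_chain un_pred (last_L_mlists n_gt0)).
- by move=> s; apply: size_le_mlists.
- by move=> s incr_s; apply: weight_chain_un_last_le.
Qed.
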